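(* Let $(X_n,\|\cdot\|_n)_{n\ge1}$ be a sequence of Banach spaces and $(X,\|\cdot\|)$ the space defined in the context. Let $(x_m)_{m\ge1}$ be a bounded sequence in $X$ and $x\in X\setminus\{0\}$ with $x_m\overset{p}{\to}x$. Then there exists an infinite subset $M\subseteq\mathbb{N}$ such that the norms of the vectors of the set $\{x_m:m\in M\}\cup\{x\}$ have the same representation.
   Context: $c_{00}((X_n))$ is the vector space of sequences $(x_1,x_2,\dots)$ with $x_k\in X_k$ and only finitely many $x_k\ne0$; $(x_1,\dots,x_n)$ denotes $(x_1,\dots,x_n,0,0,\dots)$. On $c_{00}((X_n))$ define inductively $\|(x_1)\|=\|x_1\|_1$ (the norm of $X_1$) and, for $n\ge2$, $$\|(x_1,\dots,x_n)\|=\Big(1-\tfrac{1}{n+1}\Big)\big(\|x_n\|_n+\|(x_1,\dots,x_{n-1})\|\big)+\tfrac{1}{n+1}\max\Big\{\tfrac{\|x_n\|_n}{n},\ \|(x_1,\dots,x_{n-1})\|\Big\}.$$ $X$ is the completion of $(c_{00}((X_n)),\|\cdot\|)$, identified with the space of sequences $x=(x_n)$, $x_n\in X_n$, with $\sum_n\|x_n\|_n<\infty$, where $\|x\|=\lim_k\|(x_1,\dots,x_k)\|$. For a sequence $x_m=(x_{m1},x_{m2},\dots)\in X$ and $x=(x_1,x_2,\dots)\in X$, write $x_m\overset{p}{\to}x$ (pointwise convergence) if $\|x_{mn}-x_n\|_n\to0$ as $m\to\infty$ for every $n\in\mathbb{N}$. Two vectors $x=(x_n),y=(y_n)\in X$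 have norms with the same representation if there exist sequences $(d_n)_{n\ge1},(s_n)_{n\ge1}\subseteq(0,1]$ with $\|x\|=\sum_n d_n\|x_n\|_n$, $\|y\|=\sum_n s_n\|y_n\|_n$ and $d_n=s_n$ for every $n$; the norms of the vectors of a set have the same representation if there is a single sequence $(d_n)\subseteq(0,1]$ with $\|z\|=\sum_n d_n\|z_n\|_n$ for every $z$ in the set. *)

From HB Require Import structures.
From mathcomp Require Import all_boot all_order all_algebra.
From mathcomp Require Import all_classical all_reals all_analysis.
Set Implicit Arguments. Unset Strict Implicit. Unset Printing Implicit Defensive.
Import Order.TTheory GRing.Theory Num.Theory.
Import numFieldNormedType.Exports.
Local Open Scope classical_set_scope.
Local Open Scope ring_scope.

(* Indexing convention: component k : nat (k >= 0) of a vector corresponds to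
   the paper's coordinate n = k+1, living in the space X k (= paper's X_{k+1}). *)

(* Given the coordinate norms a k = ||x_{k+1}||_{k+1}, [tnorm a k] is the
   paper's ||(x_1,...,x_{k+1})||, defined by the paper's recursion. *)
Fixpoint tnorm (R : realType) (a : nat -> R) (k : nat) : R :=
  match k with
  | 0 => a 0%N
  | k'.+1 =>
      let n : R := (k'.+2)%:R in (* paper index n = k+1 = k'+2 *)
      (1 - (n + 1)^-1) * (a k'.+1 + tnorm a k')
      + (n + 1)^-1 * Num.max (a k'.+1 / n) (tnorm a k')
  end.

Definition inX (R : realType) (X : nat -> normedModType R) (x : forall k, X k) : Prop :=
  cvgn (series (fun k => `|x k|)).

Definition Xnorm (R : realType) (X : nat -> normedModType R) (x : forall k, X k) : R :=
  lim (tnorm (fun k => `|x k|) k @[k --> \oo]).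

Definition pconv (R : realType) (X : nat -> normedModType R)
  (xs : nat -> forall k, X k) (x : forall k, X k) : Prop :=
  forall k, (`|xs m k - x k| @[m --> \oo] --> (0 : R)).

Definition same_repr (R : realType) (X : nat -> normedModType R)
  (S : set (forall k, X k)) : Prop :=
  exists d : nat -> R, (forall k, 0 < d k <= 1) /\
    forall z, S z -> series (fun k => d k * `|z k|) @ \oo --> Xnorm z.

From HB Require Import structures.
From mathcomp Require Import all_boot all_order all_algebra.
From mathcomp Require Import all_classical all_reals all_analysis.
From mathcomp Require Import ring lra.
Import Order.TTheory GRing.Theory Num.Theory.
Import numFieldNormedType.Exports.
Local Open Scope classical_set_scope.
Local Open Scope ring_scope.

(* The maximum in the recursion defining the norm of (x_1, ..., x_n) is
   attained either by ||x_n||_n / n or by the norm of (x_1, ..., x_{n-1}); once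
   the branch is known at every step, the norm is a fixed combination
   sum_k d_k ||x_k||_k with 0 < d_k <= 1.  For a bounded sequence converging
   pointwise to x <> 0, all truncated norms are bounded above by some B and,
   from the first nonzero coordinate of x on, below by a common d > 0, so
   beyond a step N depending only on B and d the second branch is always
   taken.  At each of the finitely many earlier steps, the branch of x_m is
   decided by the sign of a quantity converging to the one of x; passing N
   times to an infinite subsequence makes all branches of the x_m agree with
   branches valid for x. *)

Definition frequently (P : nat -> Prop) := forall n, exists2 m, (n <= m)%N & P m.

Lemma frequently_sub (P Q : nat -> Prop) :
  (forall m, P m -> Q m) -> frequently P -> frequently Q.
Proof. by move=> PQ FP n; have [m nm /PQ] := FP n; exists m. Qed.

Lemma frequently_or (P Q : nat -> Prop) :
  frequently (fun m => P m \/ Q m) -> frequently P \/ frequently Q.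
Proof.
move=> FPQ; case: (pselect (frequently P)) => [|nFP]; first by left.
right; have [n0 n0P] : exists n0, forall m, (n0 <= m)%N -> ~ P m.
  apply: contrapT => hn; apply: nFP => n; apply: contrapT => hm; apply: hn.
  by exists n => m nm Pm; apply: hm; exists m.
move=> n; have [m nm [Pm|Qm]] := FPQ (maxn n n0); last first.
  by exists m => //; exact: leq_trans (leq_maxl _ _) nm.
by have := n0P m (leq_trans (leq_maxr _ _) nm).
Qed.

Lemma frequently_infinite (P : set nat) : frequently P -> infinite_set P.
Proof.
move=> FP /finite_fsetP [X eX].
have [m mX Pm] := FP (\max_(i <- finmap.enum_fset X) i).+1.
have {}Pm : m \in finmap.enum_fset X by move: Pm; rewrite eX.
by have := leq_trans mX (@leq_bigmax_seq nat _ predT id m Pm isT); rewrite ltnn.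
Qed.

Section FrequentlySign.
Context {R : realType}.

Lemma frequently_ge_cvg {g : nat -> R} {l y : R} :
  g m @[m --> \oo] --> l -> frequently (fun m => y <= g m) -> y <= l.
Proof.
move=> gl Fg; rewrite leNgt; apply/negP => /(cvgr_lt _ gl) [n0 _ n0g].
have [m nm] := Fg n0; rewrite leNgt => /negP; apply; exact: n0g.
Qed.

Lemma frequently_le_cvg {g : nat -> R} {l y : R} :
  g m @[m --> \oo] --> l -> frequently (fun m => g m <= y) -> l <= y.
Proof.
move=> gl Fg; rewrite -lerN2.
apply: (@frequently_ge_cvg (fun m => - g m)); first exact: cvgN.
by apply: frequently_sub Fg => m; rewrite lerN2.
Qed.

End FrequentlySign.

Section TruncatedNorm.
Context {R : realType}.
Implicit Types (a : nat -> R) (p : nat -> bool).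

(* The paper's index n at the step from [tnorm a t] to [tnorm a t.+1]. *)
Definition nstep t : R := (t.+2)%:R.
Definition mixw t : R := (nstep t + 1)^-1.

Lemma tnormS a t : tnorm a t.+1 =
  (1 - mixw t) * (a t.+1 + tnorm a t) + mixw t * Num.max (a t.+1 / nstep t) (tnorm a t).
Proof. by []. Qed.

Lemma nstep_ge2 t : 2 <= nstep t.
Proof. by rewrite /nstep ler_nat. Qed.

Lemma inv_nstep_bounds t : 0 < (nstep t)^-1 <= 1/2.
Proof.
have n2 := nstep_ge2 t.
by rewrite invr_gt0 mul1r lef_pV2 ?posrE /=; lra.
Qed.

Lemma mixw_bounds t : 0 < mixw t <= 1/3.
Proof.
have n2 := nstep_ge2 t.
by rewrite invr_gt0 mul1r lef_pV2 ?posrE /=; lra.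
Qed.

Lemma tnorm_step_bounds a t : (forall i, 0 <= a i) -> 0 <= tnorm a t ->
  [/\ tnorm a t <= tnorm a t.+1, a t.+1 <= 2 * tnorm a t.+1
    & tnorm a t.+1 <= tnorm a t + a t.+1].
Proof.
move=> a_ge0 T_ge0; rewrite tnormS.
set q := mixw t; set T := tnorm a t in T_ge0 *; set y := a t.+1; set m := Num.max _ _.
have /andP[q_gt0 q_le] : 0 < q <= 1/3 := mixw_bounds t.
have /andP[_ invn_le] := inv_nstep_bounds t.
have y_ge0 : 0 <= y := a_ge0 t.+1.
have Tm : T <= m by rewrite le_max lexx orbT.
have maT : m <= y + T.
  rewrite ge_max lerDr y_ge0 andbT; apply: (@le_trans _ _ y); last by rewrite lerDl.
  by rewrite -[leRHS]mulr1 ler_wpM2l //; apply: le_trans invn_le _; lra.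
have qTm : q * T <= q * m by rewrite ler_wpM2l // ltW.
have qmT : q * m <= q * (y + T) by rewrite ler_wpM2l // ltW.
have qy : q * y <= 1/3 * y by rewrite ler_wpM2r.
by split; nra.
Qed.

Lemma tnorm_ge0 a t : (forall i, 0 <= a i) -> 0 <= tnorm a t.
Proof.
move=> a_ge0; elim: t => [|t IH]; first exact: a_ge0.
by case: (tnorm_step_bounds a t a_ge0 IH) => /(le_trans IH).
Qed.

Lemma nondecreasing_tnorm {a} : (forall i, 0 <= a i) -> nondecreasing_seq (tnorm a).
Proof.
move=> a_ge0; apply/nondecreasing_seqP => t.
by case: (tnorm_step_bounds a t a_ge0 (tnorm_ge0 a t a_ge0)).
Qed.

Lemma coord_le_tnorm {a k t} : (forall i, 0 <= a i) -> (k <= t)%N ->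
  a k <= 2 * tnorm a t.
Proof.
move=> a_ge0 kt; apply: (@le_trans _ _ (2 * tnorm a k)).
  case: k {kt} => [|k] /=; first by have := a_ge0 0%N; lra.
  by case: (tnorm_step_bounds a k a_ge0 (tnorm_ge0 a k a_ge0)).
by rewrite ler_pM2l //; exact: nondecreasing_tnorm.
Qed.

Lemma tnorm_le_lim {a} : (forall i, 0 <= a i) -> cvgn (series a) ->
  forall t, tnorm a t <= lim (tnorm a k @[k --> \oo]).
Proof.
move=> a_ge0 sa.
have nd := nondecreasing_tnorm a_ge0.
have nds : nondecreasing_seq (series a).
  by apply/nondecreasing_seqP => n; rewrite seriesSr lerDl.
have T_le_series t : tnorm a t <= series a t.+1.
  elim: t => [|t IH]; first by rewrite /series /= big_nat1.
  case: (tnorm_step_bounds a t a_ge0 (tnorm_ge0 a t a_ge0)) => _ _ /le_trans; apply.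
  by rewrite seriesSr lerD2r.
have ub : has_ubound (range (tnorm a)).
  exists (limn (series a)) => _ [t _ <-].
  exact: le_trans (T_le_series t) (nondecreasing_cvgn_le nds sa _).
have cv : cvgn (tnorm a).
  by apply/cvg_ex; exists (sup (range (tnorm a))); exact: nondecreasing_cvgn nd ub.
exact: nondecreasing_cvgn_le nd cv.
Qed.

Definition branch_gap a t : R := a t.+1 / nstep t - tnorm a t.

(* [max_branch true a t]: the maximum in the recursion for [tnorm a t.+1] is
   attained by the new coordinate; [max_branch false a t]: by [tnorm a t]. *)
Definition max_branch (v : bool) a t : Prop :=
  if v then 0 <= branch_gap a t else branch_gap a t <= 0.

Definition old_coef p t : R := if p t then 1 - mixw t else 1.
Definition new_coef p t : R :=
  if p t then 1 - mixw t + mixw t / nstep t else 1 - mixw t.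

Lemma tnormS_branch p a t : max_branch (p t) a t ->
  tnorm a t.+1 = old_coef p t * tnorm a t + new_coef p t * a t.+1.
Proof.
rewrite tnormS /max_branch /branch_gap /old_coef /new_coef.
by case: (p t) => [/[!subr_ge0] ? | /[!subr_le0] ?];
  [rewrite max_l | rewrite max_r] => //; ring.
Qed.

Lemma old_coef_bounds p t : 0 < old_coef p t <= 1.
Proof. by have := mixw_bounds t; rewrite /old_coef; case: (p t); lra. Qed.

Lemma new_coef_bounds p t : 0 < new_coef p t <= 1.
Proof.
have /andP[q_gt0 q_le] := mixw_bounds t.
have /andP[invn_gt0 invn_le] := inv_nstep_bounds t.
have qn_gt0 : 0 < mixw t / nstep t by rewrite mulr_gt0.
have qn_le : mixw t / nstep t <= mixw t by rewrite ger_pMr //; apply: le_trans invn_le _; lra.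
rewrite /new_coef; move: (mixw t / nstep t) qn_gt0 qn_le => r ? ?.
by case: (p t); lra.
Qed.

Definition weight p t i : R :=
  (if i is i'.+1 then new_coef p i' else 1) * \prod_(i <= s < t) old_coef p s.

Lemma weight_bounds p t i : 0 < weight p t i <= 1.
Proof.
have /andP[c_gt0 c_le1] :
    0 < \prod_(i <= s < t) old_coef p s <= 1.
  apply: (big_ind (fun x : R => 0 < x <= 1)); first by rewrite ltr01 lexx.
    by move=> x y /andP[? ?] /andP[? ?]; rewrite mulr_gt0 //= mulr_ile1 // ltW.
  by move=> s _; exact: old_coef_bounds.
have /andP[l_gt0 l_le1] : 0 < (if i is i'.+1 then new_coef p i' else 1) <= 1.
  by case: (i) => [|j]; [rewrite ltr01 lexx | exact: new_coef_bounds].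
by rewrite /weight mulr_gt0 //= mulr_ile1 // ltW.
Qed.

Lemma tnorm_weighted p a t : (forall s, (s < t)%N -> max_branch (p s) a s) ->
  tnorm a t = \sum_(i < t.+1) weight p t i * a i.
Proof.
elim: t => [|t IH] Hp.
  by rewrite big_ord_recr big_ord0 /weight big_geq //= add0r !mul1r.
rewrite (tnormS_branch _ _ _ (Hp t (ltnSn t))) IH; last by move=> s /ltnW/Hp.
rewrite [in RHS]big_ord_recr mulr_sumr /=.
have -> : weight p t.+1 t.+1 = new_coef p t by rewrite /weight big_geq ?mulr1.
congr (_ + _); apply: eq_bigr => i _.
by rewrite /weight big_nat_recr 1?mulrCA ?mulrA //= -ltnS ltn_ord.
Qed.

Lemma weight_stable p N t i : (forall s, (N <= s)%N -> p s = false) ->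
  (N <= t)%N -> weight p t i = weight p N i.
Proof.
move=> pN Nt; rewrite /weight; congr (_ * _).
have old1 s : (N <= s)%N -> old_coef p s = 1 by move=> Ns; rewrite /old_coef pN.
case: (leqP i N) => [iN | Ni].
  have tail1 : \prod_(N <= s < t) old_coef p s = 1.
    by rewrite big_nat_cond big1 // => s /andP[/andP[/old1 ->]].
  by rewrite (big_cat_nat iN Nt) tail1 /= mulr1.
rewrite [RHS]big_geq ?(ltnW Ni) // big_nat_cond big1 // => s /andP[/andP[si _] _].
by apply: old1; exact: leq_trans (ltnW Ni) si.
Qed.

Lemma weighted_series {p N a} : (forall i, 0 <= a i) -> cvgn (series a) ->
  (forall s, max_branch (p s) a s) -> (forall s, (N <= s)%N -> p s = false) ->
  series (fun k => weight p N k * a k) @ \oo --> lim (tnorm a k @[k --> \oo]).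
Proof.
move=> a_ge0 sa Hp pN; set u := fun k => weight p N k * a k.
have u_ge0 k : 0 <= u k.
  by have /andP[w_gt0 _] := weight_bounds p N k; rewrite mulr_ge0 // ltW.
have u_le k : u k <= a k.
  by have /andP[_ w_le1] := weight_bounds p N k; exact: ler_piMl.
have su : cvgn (series u) by exact: series_le_cvg u_ge0 a_ge0 u_le sa.
have T_series t : (N <= t)%N -> tnorm a t = series u t.+1.
  move=> Nt; rewrite (@tnorm_weighted p a t (fun s _ => Hp s)) /series /= big_mkord.
  by apply: eq_bigr => i _; rewrite /u (@weight_stable p N t i pN Nt).
have Tu : tnorm a @ \oo --> limn (series u).
  have suS : [sequence series u n.+1]_n @ \oo --> limn (series u).
    by rewrite cvg_shiftS; exact: su.
  apply: cvg_trans suS; apply: near_eq_cvg; exists N => // t /= Nt.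
  by rewrite T_series.
by rewrite (cvg_lim _ Tu).
Qed.

Lemma cvg_maxr (u v : nat -> R) (l l' : R) :
  u m @[m --> \oo] --> l -> v m @[m --> \oo] --> l' ->
  Num.max (u m) (v m) @[m --> \oo] --> Num.max l l'.
Proof.
move=> ul vl'; under eq_fun => m do rewrite maxr_absE.
rewrite maxr_absE; apply: cvgM; last exact: cvg_cst.
by apply: cvgD; [exact: cvgD | apply: cvg_norm; exact: cvgB].
Qed.

Lemma tnorm_cvg (u : nat -> nat -> R) (b : nat -> R) :
  (forall i, u m i @[m --> \oo] --> b i) ->
  forall t, tnorm (u m) t @[m --> \oo] --> tnorm b t.
Proof.
move=> ub; elim=> [|t IH]; first exact: ub.
under eq_fun => m do rewrite tnormS.
rewrite tnormS; apply: cvgD; apply: cvgM; try exact: cvg_cst.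
  by apply: cvgD; [exact: ub | exact: IH].
by apply: cvg_maxr => //; apply: cvgM; [exact: ub | exact: cvg_cst].
Qed.

Lemma branch_gap_cvg (u : nat -> nat -> R) (b : nat -> R) t :
  (forall i, u m i @[m --> \oo] --> b i) ->
  branch_gap (u m) t @[m --> \oo] --> branch_gap b t.
Proof.
move=> ub; apply: cvgB; last exact: tnorm_cvg.
by apply: cvgM; [exact: ub | exact: cvg_cst].
Qed.

Lemma frequently_branch {P : nat -> Prop} {u : nat -> nat -> R} {b : nat -> R} t :
  (forall i, u m i @[m --> \oo] --> b i) -> frequently P ->
  exists v, max_branch v b t /\ frequently (fun m => P m /\ max_branch v (u m) t).
Proof.
move=> ub FP; have gap_lim := @branch_gap_cvg u b t ub.
have : frequently (fun m => (P m /\ max_branch true (u m) t) \/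
                            (P m /\ max_branch false (u m) t)).
  apply: frequently_sub FP => m Pm; rewrite /max_branch.
  by case: (lerP 0 (branch_gap (u m) t)) => g; [left | right; rewrite ltW].
case/frequently_or => [Fge|Fle].
- exists true; split => //; rewrite /max_branch; apply: (frequently_ge_cvg gap_lim).
  by apply: frequently_sub Fge => m [].
- exists false; split => //; rewrite /max_branch; apply: (frequently_le_cvg gap_lim).
  by apply: frequently_sub Fle => m [].
Qed.

Lemma common_branches {u : nat -> nat -> R} {b : nat -> R} {P : nat -> Prop} j :
  (forall i, u m i @[m --> \oo] --> b i) -> frequently P ->
  exists q : nat -> bool, (forall t, (t < j)%N -> max_branch (q t) b t) /\
    frequently (fun m => P m /\ forall t, (t < j)%N -> max_branch (q t) (u m) t).
Proof.
move=> ub FP; elim: j => [|j [q [qb qu]]].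
  by exists xpred0; split=> //; apply: frequently_sub FP.
have [v [vb vu]] := frequently_branch j ub qu.
exists (fun t => if t == j then v else q t); split.
  by move=> t; rewrite ltnS leq_eqVlt; case: eqP => [-> | _ /qb].
apply: frequently_sub vu => m [[Pm qm] vm]; split=> // t.
by rewrite ltnS leq_eqVlt; case: eqP => [-> | _ /qm].
Qed.

Lemma tail_branch_false {c : nat -> R} {B d : R} {k0} : (forall i, 0 <= c i) ->
  (forall t, tnorm c t <= B) -> 0 < d -> d <= c k0 ->
  forall t, (k0 + Num.bound (4 * B / d) <= t)%N -> max_branch false c t.
Proof.
move=> c_ge0 cB d_gt0 dc t tN.
have k0t : (k0 <= t)%N by exact: leq_trans (leq_addr _ _) tN.
have B_ge0 : 0 <= B := le_trans (tnorm_ge0 c 0 c_ge0) (cB 0%N).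
have ct1 : c t.+1 <= 2 * B.
  by apply: le_trans (coord_le_tnorm c_ge0 (leqnn t.+1)) _; rewrite ler_pM2l.
have Tt : d <= 2 * tnorm c t by exact: le_trans dc (coord_le_tnorm c_ge0 k0t).
have n_gt0 : 0 < nstep t by have := nstep_ge2 t; lra.
have nd : 4 * B / d <= nstep t.
  apply/ltW/(lt_le_trans (archi_boundP _)); first by rewrite divr_ge0 ?mulr_ge0 // ltW.
  rewrite /nstep ler_nat; apply: leq_trans (leq_addl k0 _) _.
  by apply: leq_trans tN _; rewrite leqW.
rewrite ler_pdivrMr // in nd.
rewrite /max_branch /branch_gap subr_le0 ler_pdivrMr //.
apply: le_trans ct1 _; nra.
Qed.

Lemma common_weights {u : nat -> nat -> R} {b : nat -> R} {B : R} {k0} :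
  (forall m i, 0 <= u m i) -> (forall i, 0 <= b i) ->
  (forall m, cvgn (series (u m))) -> cvgn (series b) ->
  (forall m t, tnorm (u m) t <= B) -> (forall t, tnorm b t <= B) ->
  (forall i, u m i @[m --> \oo] --> b i) -> 0 < b k0 ->
  exists M : set nat, infinite_set M /\ exists w : nat -> R,
    [/\ forall k, 0 < w k <= 1,
      forall m, M m ->
        series (fun k => w k * u m k) @ \oo --> lim (tnorm (u m) k @[k --> \oo])
    & series (fun k => w k * b k) @ \oo --> lim (tnorm b k @[k --> \oo])].
Proof.
move=> u_ge0 b_ge0 su sb uB bB ub bk0.
pose d := b k0 / 2.
have d_gt0 : 0 < d by rewrite divr_gt0.
have d_lt : d < b k0 by rewrite ltr_pdivrMr // ltr_pMr // ltr1n.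
have [m0 _ um0] := cvgr_gt _ (ub k0) d d_lt.
have Fm0 : frequently (fun m => (m0 <= m)%N).
  by move=> n; exists (maxn n m0); [exact: leq_maxl | exact: leq_maxr].
pose N := (k0 + Num.bound (4 * B / d))%N.
have [q [qb qu]] := common_branches N ub Fm0.
pose p t := (t < N)%N && q t.
have pN s : (N <= s)%N -> p s = false by rewrite /p ltnNge => ->.
have branches c : (forall i, 0 <= c i) -> (forall t, tnorm c t <= B) ->
    d <= c k0 -> (forall t, (t < N)%N -> max_branch (q t) c t) ->
    forall s, max_branch (p s) c s.
  move=> c_ge0 cB dc cq s; rewrite /p; case: ltnP => [/cq // | sN].
  exact: tail_branch_false c_ge0 cB d_gt0 dc s sN.
exists [set m | (m0 <= m)%N /\ forall t, (t < N)%N -> max_branch (q t) (u m) t].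
split; first exact: frequently_infinite.
exists (weight p N); split; first exact: weight_bounds.
  move=> m [m0m uq].
  have um_branches := branches _ (u_ge0 m) (uB m) (ltW (um0 m m0m)) uq.
  exact: weighted_series (u_ge0 m) (su m) um_branches pN.
have b_branches := branches _ b_ge0 bB (ltW d_lt) qb.
exact: weighted_series b_ge0 sb b_branches pN.
Qed.

End TruncatedNorm.

Theorem proposition1p10 (R : realType) (X : nat -> completeNormedModType R)
  (xs : nat -> forall k, X k) (x : forall k, X k) :
  (forall m, inX (xs m)) ->
  (exists C : R, forall m, Xnorm (xs m) <= C) ->
  inX x -> (exists k, x k != 0) ->
  pconv xs x ->
  exists M : set nat, infinite_set M /\
    same_repr ([set xs m | m in M] `|` [set x]).
Proof.
move=> xs_in [C xsC] x_in [k0 xk0] xs_x.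
pose a m k := `|xs m k|; pose b k := `|x k|.
have a_ge0 m i : 0 <= a m i by exact: normr_ge0.
have b_ge0 i : 0 <= b i by exact: normr_ge0.
pose B := Num.max C (Xnorm x).
have aB m t : tnorm (a m) t <= B.
  by rewrite le_max (le_trans (tnorm_le_lim (a_ge0 m) (xs_in m) t)) ?xsC.
have bB t : tnorm b t <= B by rewrite le_max (tnorm_le_lim b_ge0 x_in) orbT.
have ab i : a m i @[m --> \oo] --> b i.
  by apply: cvg_norm; apply/subr_cvg0; apply: norm_cvg0; exact: xs_x.
have bk0 : 0 < b k0 by rewrite normr_gt0.
have [M [M_inf [w [w_bounds wa wb]]]] :=
  common_weights a_ge0 b_ge0 xs_in x_in aB bB ab bk0.
exists M; split=> //; exists w; split=> // z [[m Mm <-] | ->]; last exact: wb.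
exact: wa.
Qed.
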